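(* Let $\mathcal{X}\subset\mathbb{R}^d$ be finite, $x_1,x_2\in\mathcal{X}$, $\rho=|x_1-x_2|$, $c=(x_1+x_2)/2$. If the edge $e=\{x_1,x_2\}$ is critical in the Vietoris–Rips filtration generated by $\mathcal{X}$, then no point of $\mathcal{X}$ lies in the ball $B_{(1-\sqrt3/2)\rho}(c)$.
   Context: The Vietoris–Rips complex is $\mathcal{R}_r(\mathcal{X})=\{\mathcal{I}\subseteq\mathcal{X}:|y-z|\le r\ \forall y,z\in\mathcal{I}\}$ and $B_r(c)$ is the closed Euclidean ball. The edge $e$ enters the filtration at radius $\rho$; it is critical if its insertion (together with the cliques containing it) changes reduced homology, which is the case precisely when the link $\mathrm{lk}(e)$ of $e$ in $\mathcal{R}_\rho(\mathcal{X})$ is empty or has some nonzero reduced Betti number $\beta_{k-2}(\mathrm{lk}(e))$, $k\ge2$. Here the link of a simplex $\sigma$ in a complex $K$ is $\{\tau\in\mathrm{st}_K(\sigma):\tau\cap\sigma=\emptyset\}$, with $\mathrm{st}_K(\sigma)$ the smallest subcomplex containing all simplices containing $\sigma$. *)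

From HB Require Import structures.
From mathcomp Require Import all_boot all_order all_algebra.
From mathcomp Require Import reals.
Set Implicit Arguments. Unset Strict Implicit. Unset Printing Implicit Defensive.
Import Order.TTheory GRing.Theory Num.Theory.
Local Open Scope ring_scope.

Definition edist (R : realType) (d : nat) (y z : 'rV[R]_d) : R :=
  Num.sqrt (\sum_(i < d) (y 0 i - z 0 i) ^+ 2).

(** Abstract simplicial complexes on a finite vertex type, as predicates on
    vertex sets (the empty simplex is allowed, as in the paper). *)

(** Vietoris--Rips complex R_r(X), X = image of the point map p. *)
Definition VR (R : realType) (d : nat) (T : finType) (p : T -> 'rV[R]_d)
  (r : R) : pred {set T} :=
  fun I => [forall y in I, forall z in I, edist (p y) (p z) <= r].

Definition star (T : finType) (K : pred {set T}) (s : {set T}) : pred {set T} :=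
  fun t => [exists u : {set T}, [&& K u, s \subset u & t \subset u]].

Definition link (T : finType) (K : pred {set T}) (s : {set T}) : pred {set T} :=
  fun t => star K s t && [disjoint t & s].

Definition face_coef (F : fieldType) (T : finType) (j i : {set T}) : F :=
  if (i \subset j) && (#|j :\: i| == 1)%N then
    if [pick v in j :\: i] is Some v then
      (-1) ^+ #|[set u in j | (enum_rank u < enum_rank v)%N]|
    else 0
  else 0.

(** Boundary matrix from simplices of K with n vertices to those with n-1
    vertices (n >= 1), all simplices of T indexed via enum_val. *)
Definition bdry_mx (F : fieldType) (T : finType) (K : pred {set T}) (n : nat)
  : 'M[F]_(#|{: {set T}}|, #|{: {set T}}|) :=
  \matrix_(a, b) (let j := enum_val a in let i := enum_val b in
     if [&& (0 < n)%N, K j, K i & #|j| == n] then face_coef F j i else 0).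

Definition nsimp (T : finType) (K : pred {set T}) (n : nat) : nat :=
  #|[set s : {set T} | K s & #|s| == n]|.

(** Reduced Betti number of K in dimension k (simplices with k+1 vertices),
    coefficients in F: dim ker d_k - rank d_(k+1). *)
Definition rbetti (F : fieldType) (T : finType) (K : pred {set T}) (k : nat)
  : nat :=
  (nsimp K k.+1 - \rank (bdry_mx F K k.+1) - \rank (bdry_mx F K k.+2))%N.

Definition critical_edge (F : fieldType) (R : realType) (d : nat) (T : finType)
  (p : T -> 'rV[R]_d) (x1 x2 : T) : Prop :=
  let rho := edist (p x1) (p x2) in
  let L := link (VR p rho) [set x1; x2] in
  (forall t, L t -> t = set0) \/
  (exists k : nat, (2 <= k)%N /\ rbetti F L (k - 2) <> 0%N).

From HB Require Import structures.
From mathcomp Require Import all_boot all_order all_algebra.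
From mathcomp Require Import reals ring lra zify.
Set Implicit Arguments. Unset Strict Implicit. Unset Printing Implicit Defensive.
Import Order.TTheory GRing.Theory Num.Theory.
Local Open Scope ring_scope.

(* The lens B_rho(x1) /\ B_rho(x2) lies in the ball of radius (sqrt 3 / 2) rho
   about the midpoint c, so a point y with |y - c| <= (1 - sqrt 3 / 2) rho is
   within rho of every point of the lens, and differs from x1, x2 since
   |x_i - c| = rho / 2. Every vertex of a simplex of the link of e lies in the
   lens, hence the link is a cone with apex y: it is nonempty, and
   sigma |-> {y} u sigma is a chain homotopy from the identity to zero, so all
   reduced Betti numbers of the link vanish. *)

Section Euclidean.
Variables (R : realType) (d : nat).
Implicit Types (a b c : 'rV[R]_d) (u v r : R).

Definition sqdist a b : R := \sum_(i < d) (a 0 i - b 0 i) ^+ 2.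

Lemma sqdist_ge0 a b : 0 <= sqdist a b.
Proof. by apply: sumr_ge0 => i _; rewrite sqr_ge0. Qed.

Lemma edist_ge0 a b : 0 <= edist a b.
Proof. exact: sqrtr_ge0. Qed.

Lemma sqr_edist a b : edist a b ^+ 2 = sqdist a b.
Proof. by rewrite sqr_sqrtr ?sqdist_ge0. Qed.

Lemma edist_le r a b : 0 <= r -> (edist a b <= r) = (sqdist a b <= r ^+ 2).
Proof. by move=> r0; rewrite -ler_sqr ?nnegrE ?edist_ge0 // sqr_edist. Qed.

Lemma edistC a b : edist a b = edist b a.
Proof. by congr Num.sqrt; apply: eq_bigr => i _; rewrite -sqrrN opprB. Qed.

Lemma edistxx a : edist a a = 0.
Proof. by rewrite /edist big1 ?sqrtr0 // => i _; rewrite subrr expr0n. Qed.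

Lemma edist_eq0 a b : (edist a b == 0) = (a == b).
Proof.
apply/idP/eqP => [|->]; last by rewrite edistxx.
rewrite sqrtr_eq0 => le0; have /eqP sum0 : sqdist a b == 0.
  by rewrite eq_le le0 sqdist_ge0.
apply/rowP => i; apply/eqP; rewrite -subr_eq0 -sqrf_eq0.
by apply/eqP; apply: (psumr_eq0P (fun i _ => sqr_ge0 _) sum0).
Qed.

Lemma sqdist_midpoint a (x1 x2 : 'rV[R]_d) :
  sqdist a (2^-1 *: (x1 + x2)) = (sqdist a x1 + sqdist a x2) / 2 - sqdist x1 x2 / 4.
Proof.
rewrite /sqdist mulrDl !mulr_suml -big_split -sumrB /=.
by apply: eq_bigr => i _; rewrite !mxE; field.
Qed.

(* Coordinatewise, [u v (s + t)^2 <= v (u + v) s^2 + u (u + v) t^2] is [0 <= (v s - u t)^2]. *)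
Lemma edist_le_add u v a b c :
  0 < u -> 0 < v -> edist a c <= u -> edist c b <= v -> edist a b <= u + v.
Proof.
move=> u0 v0; have uv0 : 0 <= u + v by rewrite addr_ge0 ?ltW.
rewrite !edist_le ?(ltW u0) ?(ltW v0) // => ac cb.
have weighted : u * v * sqdist a b <= v * (u + v) * sqdist a c + u * (u + v) * sqdist c b.
  rewrite /sqdist !mulr_sumr -big_split /=; apply: ler_sum => i _.
  rewrite -subr_ge0 (_ : _ - _ = (v * (a 0 i - c 0 i) - u * (c 0 i - b 0 i)) ^+ 2).
    exact: sqr_ge0.
  by ring.
rewrite -(@ler_pM2l _ (u * v)) ?mulr_gt0 //; apply: (le_trans weighted).
have -> : u * v * (u + v) ^+ 2 = v * (u + v) * u ^+ 2 + u * (u + v) * v ^+ 2 by ring.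
by apply: lerD; apply: ler_wpM2l => //; rewrite mulr_ge0 ?addr_ge0 ?ltW.
Qed.

Lemma edist_midpoint (x1 x2 : 'rV[R]_d) : edist x1 (2^-1 *: (x1 + x2)) = edist x1 x2 / 2.
Proof.
apply/eqP; rewrite -(@eqrXn2 _ 2) ?divr_ge0 ?edist_ge0 // expr_div_n !sqr_edist.
rewrite sqdist_midpoint -(sqr_edist x1 x1) edistxx expr0n /=.
by apply/eqP; field.
Qed.

Lemma edist_lens_midpoint (x1 x2 : 'rV[R]_d) a :
  edist a x1 <= edist x1 x2 -> edist a x2 <= edist x1 x2 ->
  edist a (2^-1 *: (x1 + x2)) <= Num.sqrt 3 / 2 * edist x1 x2.
Proof.
have r0 := edist_ge0 x1 x2.
rewrite !edist_le ?mulr_ge0 ?invr_ge0 ?sqrtr_ge0 // => a1 a2.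
rewrite sqdist_midpoint exprMn expr_div_n sqr_sqrtr // -(sqr_edist x1 x2).
lra.
Qed.

End Euclidean.

Lemma sqrt3_gt1_lt2 (R : realType) : 1 < Num.sqrt (3 : R) < 2.
Proof.
have s2 : Num.sqrt 3 ^+ 2 = 3 :> R by rewrite sqr_sqrtr.
have s0 : 0 <= Num.sqrt 3 :> R := sqrtr_ge0 _.
by apply/andP; split; nra.
Qed.

Section MidpointBall.
Variables (R : realType) (d : nat) (x1 x2 y : 'rV[R]_d).
Local Notation c := (2^-1 *: (x1 + x2)).
Local Notation rho := (edist x1 x2).
Local Notation s := (Num.sqrt 3 : R).
Hypothesis rho_gt0 : 0 < rho.
Hypothesis y_near_c : edist y c <= (1 - s / 2) * rho.

Lemma midpoint_ball_neq_l : y != x1.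
Proof.
apply: contraTneq y_near_c => ->; rewrite -ltNge edist_midpoint.
have /andP[s1 _] := sqrt3_gt1_lt2 R.
have : 0 < rho * (s - 1) by rewrite mulr_gt0 // subr_gt0.
lra.
Qed.

Lemma midpoint_ball_lens a : edist a x1 <= rho -> edist a x2 <= rho -> edist y a <= rho.
Proof.
move=> a1 a2; have /andP[s1 s2] := sqrt3_gt1_lt2 R.
have -> : rho = (1 - s / 2) * rho + s / 2 * rho by ring.
apply: (edist_le_add (c := c)) => //; try by rewrite mulr_gt0 //; lra.
by rewrite (edistC c); apply: edist_lens_midpoint.
Qed.

End MidpointBall.

Section Link.
Variables (T : finType) (K : pred {set T}).

Lemma link_subset (s t t' : {set T}) : link K s t -> t' \subset t -> link K s t'.
Proof.
case/andP => /existsP[u /and3P[Ku su tu]] dts t't; apply/andP; split.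
  by apply/existsP; exists u; rewrite Ku su (subset_trans t't tu).
exact: disjointWl t't dts.
Qed.

Lemma link_set0 s : K s -> link K s set0.
Proof.
move=> Ks; rewrite /link disjoints_subset sub0set andbT.
by apply/existsP; exists s; rewrite Ks subxx sub0set.
Qed.

Hypothesis K_down : forall u v : {set T}, K u -> v \subset u -> K v.

Lemma linkE s t : link K s t = K (s :|: t) && [disjoint t & s].
Proof.
congr andb; apply/existsP/idP => [[u /and3P[Ku su tu]]|Kst].
  by apply: K_down Ku _; rewrite subUset su tu.
by exists (s :|: t); rewrite Kst subsetUl subsetUr.
Qed.

End Link.

Section VietorisRips.
Variables (R : realType) (d : nat) (T : finType) (p : T -> 'rV[R]_d) (r : R).
Implicit Types (I J s t : {set T}).

Lemma VRP I : reflect {in I &, forall a b, edist (p a) (p b) <= r} (VR p r I).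
Proof.
apply: (iffP forall_inP) => [VRI a b aI bI | VRI a aI].
  exact: (forall_inP (VRI a aI)).
by apply/forall_inP => b bI; apply: VRI.
Qed.

Lemma VR_subset I J : VR p r I -> J \subset I -> VR p r J.
Proof. by move=> /VRP VRI /subsetP JI; apply/VRP => a b /JI aI /JI bI; apply: VRI. Qed.

Lemma VR_pair a b : edist (p a) (p b) <= r -> VR p r [set a; b].
Proof.
move=> abr; have r0 := le_trans (edist_ge0 _ _) abr.
by apply/VRP => u v; rewrite !inE => /orP[]/eqP-> /orP[]/eqP->; rewrite ?edistxx // edistC.
Qed.

Lemma link_VR_cone s y :
  0 <= r -> y \notin s ->
  (forall a, {in s, forall b, edist (p a) (p b) <= r} -> edist (p y) (p a) <= r) ->
  forall t, link (VR p r) s t -> link (VR p r) s (y |: t).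
Proof.
move=> r0 ys y_close t; rewrite !(linkE VR_subset) => /andP[/VRP VRst dts].
have y_st a : a \in s :|: t -> edist (p y) (p a) <= r.
  by move=> ast; apply: y_close => b bs; apply: VRst; rewrite // inE bs.
apply/andP; split; last by rewrite disjoints_subset subUset sub1set inE ys -disjoints_subset.
apply/VRP => a b; rewrite setUCA => /setU1P[->|ast] /setU1P[->|bst].
- by rewrite edistxx.
- exact: y_st.
- by rewrite edistC; apply: y_st.
- exact: VRst.
Qed.

End VietorisRips.

Section MatrixOfFun.
Variables (F : fieldType) (I : finType).
Local Notation n := #|{: I}|.

Definition fmx (g : I -> I -> F) : 'M[F]_(n, n) :=
  \matrix_(a, b) g (enum_val a) (enum_val b).

Lemma fmxD g1 g2 : fmx g1 + fmx g2 = fmx (fun i j => g1 i j + g2 i j).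
Proof. by apply/matrixP => a b; rewrite !mxE. Qed.

Lemma fmxM g1 g2 : fmx g1 *m fmx g2 = fmx (fun i j => \sum_k g1 i k * g2 k j).
Proof.
apply/matrixP => a b; rewrite !mxE (big_enum_val (fun k => g1 _ k * g2 k _)).
by apply: eq_bigr => c _; rewrite !mxE.
Qed.

Lemma fmx_rank_ge g (Q : {set I}) :
  {in Q &, forall i j, g i j = (i == j)%:R} -> (#|Q| <= \rank (fmx g))%N.
Proof.
move=> gQ.
pose M : 'M[F]_(#|Q|, n) := \matrix_(i, a) (enum_val a == enum_val i)%:R.
apply: (mulmx1_min_rank (M := M) (N := M^T)).
have Mg i b : (M *m fmx g) i b = g (enum_val i) (enum_val b).
  rewrite mxE; under eq_bigr do rewrite !mxE.
  rewrite -(big_enum_val (fun k => (k == enum_val i)%:R * g k _)) /=.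
  rewrite (bigD1 (enum_val i)) //= eqxx mul1r big1 ?addr0 // => k /negbTE->.
  by rewrite mul0r.
apply/matrixP => i j; rewrite !mxE; under eq_bigr do rewrite Mg !mxE.
rewrite -(big_enum_val (fun k => g _ k * (k == enum_val j)%:R)) /=.
rewrite (bigD1 (enum_val j)) //= eqxx mulr1 big1 ?addr0 => [|k /negbTE->]; last first.
  by rewrite mulr0.
by rewrite gQ ?enum_valP // (inj_eq enum_val_inj).
Qed.

End MatrixOfFun.

Section FaceSign.
Variables (F : fieldType) (T : finType).
Implicit Types (i j s : {set T}) (v w y : T).

Definition face_sign j v : F :=
  (-1) ^+ #|[set u in j | (enum_rank u < enum_rank v)%N]|.

Lemma face_coef_delete j v : v \in j -> face_coef F j (j :\ v) = face_sign j v.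
Proof.
move=> vj; rewrite /face_coef subD1set /=.
have -> : j :\: (j :\ v) = [set v].
  by apply/setP => u; rewrite !inE; case: eqP => [->|_]; rewrite ?vj //= andNb.
by rewrite cards1 eqxx; case: pickP => [w|/(_ v)]; rewrite !inE ?eqxx // => /eqP->.
Qed.

Lemma face_coef_eq0 j i : (forall v, v \in j -> i != j :\ v) -> face_coef F j i = 0.
Proof.
move=> not_face; rewrite /face_coef; case: ifP => // /andP[ij /cards1P[v jiv]].
have /setDP[vj vi] : v \in j :\: i by rewrite jiv set11.
have /eqP[] := not_face v vj; apply/setP => u; rewrite !inE.
have := congr1 (fun S : {set T} => u \in S) jiv; rewrite /= !inE.
by case: (boolP (u \in i)) => ui /=; [move=> <-; rewrite (subsetP ij) | move=> ->; case: eqP].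
Qed.

Lemma mulr_face_sign j v : face_sign j v * face_sign j v = 1.
Proof. by rewrite -exprD -signr_odd oddD addbb. Qed.

Lemma card_setU1_pred w s (P : pred T) : w \notin s ->
  #|[set u in w |: s | P u]| = (P w + #|[set u in s | P u]|)%N.
Proof.
move=> ws; case: (boolP (P w)) => Pw.
  have -> : [set u in w |: s | P u] = w |: [set u in s | P u].
    by apply/setP => u; rewrite !inE; case: eqP => // ->.
  by rewrite cardsU1 !inE (negbTE ws).
have -> // : [set u in w |: s | P u] = [set u in s | P u].
by apply/setP => u; rewrite !inE; case: eqP => // ->; rewrite (negbTE Pw) (negbTE ws).
Qed.

Lemma face_signU1 w s v : w \notin s ->
  face_sign (w |: s) v = (-1) ^+ (enum_rank w < enum_rank v)%N * face_sign s v.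
Proof.
move=> ws; rewrite /face_sign.
by rewrite (card_setU1_pred (fun u => enum_rank u < enum_rank v)%N) // exprD.
Qed.

(* The two ways from [s] to [y |: (s :\ v)], coning then deleting [v] or
   deleting [v] then coning, differ by the sign of the transposition of [v] and [y]. *)
Lemma face_sign_cone y s v : y \notin s -> v \in s -> v != y ->
  face_sign (y |: s) y * face_sign (y |: s) v
  + face_sign s v * face_sign (y |: (s :\ v)) y = 0.
Proof.
move=> ys vs vy; rewrite -{1 2 3}(setD1K vs).
have vsv : v \notin s :\ v by rewrite setD11.
have ysv : y \notin s :\ v by rewrite !inE negb_and ys orbT.
have yvs : y \notin v |: (s :\ v) by rewrite !inE negb_or eq_sym vy.
rewrite !face_signU1 // !ltnn !expr0 !mul1r.
case: (ltngtP (enum_rank v) (enum_rank y)) => [_|_|/val_inj/enum_rank_inj v_eq_y].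
- by rewrite expr1 expr0; ring.
- by rewrite expr1 expr0; ring.
- by rewrite v_eq_y eqxx in vy.
Qed.

End FaceSign.

Lemma setD1U1 (T : finType) (s : {set T}) (v y : T) :
  v != y -> (y |: s) :\ v = y |: (s :\ v).
Proof.
by move=> vy; apply/setP => u; rewrite !inE; case: (eqVneq u v) => [->|]; rewrite ?(negbTE vy).
Qed.

Section ConeHomotopy.
Variables (F : fieldType) (T : finType) (K : pred {set T}) (y : T).
Hypothesis K_cone : forall t, K t -> K (y |: t).
Hypothesis K_down : forall t t' : {set T}, K t -> t' \subset t -> K t'.
Implicit Types (r s : {set T}) (v : T).

Definition bdry n j i : F :=
  if [&& (0 < n)%N, K j, K i & #|j| == n] then face_coef F j i else 0.

Definition cone_op s t : F :=
  if [&& K s, y \notin s & t == y |: s] then face_coef F t s else 0.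

Lemma bdry_mxE n : bdry_mx F K n = fmx (bdry n).
Proof. by []. Qed.

Lemma bdryE n j i : (0 < n)%N -> K j -> K i -> #|j| = n -> bdry n j i = face_coef F j i.
Proof. by move=> n_gt0 Kj Ki jn; rewrite /bdry n_gt0 Kj Ki jn eqxx. Qed.

Lemma sum_cone_bdry n s r : K s ->
  \sum_t cone_op s t * bdry n t r =
  if y \in s then 0 else face_coef F (y |: s) s * bdry n (y |: s) r.
Proof.
move=> Ks; case: ifPn => ys.
  by rewrite big1 // => t _; rewrite /cone_op ys andbF mul0r.
rewrite (bigD1 (y |: s)) //= big1 ?addr0 /cone_op ?Ks ?ys ?eqxx // => t.
by rewrite eq_sym => /negbTE->; rewrite !andbF mul0r.
Qed.

Lemma sum_bdry_cone n s r : K r ->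
  \sum_t bdry n s t * cone_op t r =
  if y \in r then bdry n s (r :\ y) * face_coef F r (r :\ y) else 0.
Proof.
move=> Kr; case: ifPn => yr.
  rewrite (bigD1 (r :\ y)) //= big1 ?addr0 /cone_op.
    by rewrite (K_down Kr (subD1set _ _)) setD11 setD1K ?eqxx.
  move=> t t_neq; case: ifP => [/and3P[_ yt /eqP rE]|]; last by rewrite mulr0.
  by rewrite rE setU1K ?eqxx in t_neq.
rewrite big1 // => t _; rewrite /cone_op.
case: ifP => [/and3P[_ _ /eqP rE]|]; last by rewrite mulr0.
by rewrite rE setU11 in yr.
Qed.

Lemma cone_homotopy_diag n s : (0 < n)%N -> K s -> #|s| = n ->
  \sum_t cone_op s t * bdry n.+1 t s + \sum_t bdry n s t * cone_op t s = 1.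
Proof.
move=> n_gt0 Ks sn; rewrite sum_cone_bdry ?sum_bdry_cone //; case: ifPn => ys.
  rewrite add0r bdryE ?(K_down Ks (subD1set _ _)) //.
  by rewrite face_coef_delete // mulr_face_sign.
rewrite addr0 bdryE ?K_cone ?cardsU1 ?ys ?sn //.
by have := face_coef_delete F (setU11 y s); rewrite setU1K // => ->; rewrite mulr_face_sign.
Qed.

Lemma cone_homotopy_offdiag n s r : (0 < n)%N -> K s -> K r -> #|s| = n -> #|r| = n ->
  s != r ->
  \sum_t cone_op s t * bdry n.+1 t r + \sum_t bdry n s t * cone_op t r = 0.
Proof.
move=> n_gt0 Ks Kr sn rn sr; rewrite sum_cone_bdry ?sum_bdry_cone //.
have Kr_y : K (r :\ y) := K_down Kr (subD1set _ _).
case: ifPn => ys.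
  rewrite add0r; case: ifPn => // yr; rewrite bdryE // face_coef_eq0 ?mul0r // => v vs.
  apply: contra_neq sr => ry_sv; have vy : v = y.
    by apply: contraPeq ry_sv => vy /setP/(_ y); rewrite !inE eqxx /= eq_sym vy ys.
  by rewrite -(setD1K ys) -(setD1K yr) ry_sv vy.
rewrite bdryE ?K_cone ?cardsU1 ?ys ?sn //.
have [[v vs rE]|not_adj] : (exists2 v, v \in s & r = y |: (s :\ v))
    \/ (forall v, v \in s -> r != y |: (s :\ v)).
  case: (boolP [exists v in s, r == y |: (s :\ v)]) => [/exists_inP[v vs /eqP]|/exists_inPn].
    by left; exists v.
  by right.
- have vy : v != y by apply: contraNneq ys => <-.
  have yr : y \in r by rewrite rE setU11.
  have ry : r :\ y = s :\ v by rewrite rE setU1K // !inE negb_and ys orbT.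
  have Ks_v : K (s :\ v) by rewrite -ry.
  have f1 : face_coef F (y |: s) s = face_sign F (y |: s) y.
    by have := face_coef_delete F (setU11 y s); rewrite setU1K.
  have f2 : face_coef F (y |: s) r = face_sign F (y |: s) v.
    by rewrite rE -setD1U1 // face_coef_delete // !inE vs orbT.
  rewrite yr f1 f2 face_coef_delete // ry bdryE // face_coef_delete // rE.
  exact: face_sign_cone.
- have -> : face_coef F (y |: s) r = 0.
    apply: face_coef_eq0 => w; rewrite !inE; case: eqP => [-> _|/eqP wy /= ws].
      by rewrite setU1K // eq_sym.
    by rewrite setD1U1 // not_adj.
  rewrite mulr0 add0r.
  case: ifPn => // yr; rewrite bdryE // face_coef_eq0 ?mul0r // => w ws.
  by apply: contra_neq (not_adj w ws) => <-; rewrite setD1K.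
Qed.

(* [cone_op * bdry + bdry * cone_op] is the identity on chains of every positive
   dimension, which bounds their number by the ranks of the two boundary maps. *)
Lemma rbetti_cone k : rbetti F K k = 0%N.
Proof.
rewrite /rbetti; set A := bdry_mx F K k.+2; set B := bdry_mx F K k.+1.
suff : (nsimp K k.+1 <= \rank B + \rank A)%N by lia.
have homotopy : (nsimp K k.+1 <= \rank (fmx cone_op *m A + B *m fmx cone_op)%R)%N.
  rewrite /A /B !bdry_mxE !fmxM fmxD; apply: fmx_rank_ge => s r.
  rewrite !inE => /andP[Ks /eqP sn] /andP[Kr /eqP rn].
  by case: eqVneq => [<-|]; [apply: cone_homotopy_diag | apply: cone_homotopy_offdiag].
apply: (leq_trans homotopy); apply: (leq_trans (mxrank_add _ _)).
by rewrite addnC leq_add ?mxrankM_maxl ?mxrankM_maxr.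
Qed.

End ConeHomotopy.

Unset Implicit Arguments.

Theorem lemmaC1 (F : fieldType) (R : realType) (d : nat) (T : finType)
  (p : T -> 'rV[R]_d) (p_inj : injective p) (x1 x2 : T) (hx : x1 != x2) :
  critical_edge F p x1 x2 ->
  forall y : T,
    ~ (edist (p y) (2^-1 *: (p x1 + p x2))
        <= (1 - Num.sqrt 3 / 2) * edist (p x1) (p x2)).
Proof.
move=> critical y y_near.
have rho_gt0 : 0 < edist (p x1) (p x2).
  by rewrite lt_def edist_eq0 (inj_eq p_inj) hx edist_ge0.
have y_near' : edist (p y) (2^-1 *: (p x2 + p x1))
               <= (1 - Num.sqrt 3 / 2) * edist (p x2) (p x1).
  by rewrite [p x2 + _]addrC [edist (p x2) _]edistC.
have y_neq1 := midpoint_ball_neq_l rho_gt0 y_near.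
have y_neq2 : p y != p x2 by apply: (midpoint_ball_neq_l _ y_near'); rewrite edistC.
have y_notin : y \notin [set x1; x2].
  rewrite !inE negb_or; apply/andP.
  by split; [move: y_neq1 | move: y_neq2]; apply: contra_neq => ->.
have cone := link_VR_cone (ltW rho_gt0) y_notin (fun a close =>
  midpoint_ball_lens rho_gt0 y_near (close x1 (setU11 _ _)) (close x2 (set22 _ _))).
case: critical => [link_empty | [k [_ betti]]].
  have /setP/(_ y) := link_empty _ (cone _ (link_set0 (VR_pair (lexx _)))).
  by rewrite !inE eqxx.
by apply: betti; apply: (rbetti_cone F cone); apply: link_subset.
Qed.
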